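(* Let $\omega\in\mathcal{F}^1(\mathbb{P}^n,e)$. If $\omega\in\mathcal{U}$ then $\sqrt{I(\omega)}=\sqrt{K(\omega)}$. Conversely, if $\sqrt{I(\omega)}=\sqrt{K(\omega)}$ then $\omega\in\mathcal{U}$.
   Context: Let $S=\mathbb{C}[x_0,\ldots,x_n]$ and $R=\sum_i x_i\partial/\partial x_i$. $\mathcal{F}^1(\mathbb{P}^n,e)$ ($e\ge2$) is the set of (classes up to scalar of) 1-forms $\omega=\sum_{i=0}^n A_i\,dx_i$, $A_i\in S$ homogeneous of degree $e-1$, not all zero, with $i_R\omega=0$, $\omega\wedge d\omega=0$ and zero locus $\mathrm{sing}(\omega)\subseteq\mathbb{P}^n$ of codimension $\ge2$. For a form $\eta$, $\mathscr{C}(\eta)$ is the ideal of $S$ generated by its polynomial coefficients. $J(\omega)=\mathscr{C}(\omega)=(A_0,\ldots,A_n)$. $I(\omega)=\{h\in S:\ h\,d\omega=\omega\wedge\eta\text{ for some polynomial 1-form }\eta\}$ (the ideal of graded projective unfoldings). $K(\omega)=(J(\omega):\mathscr{C}(d\omega))$, and $\mathcal{K}=\mathrm{Proj}(S/K(\omega))$. For a homogeneous prime $\mathfrak{p}\subset S$ other than $(x_0,\ldots,x_n)$ (a point of $\mathbb{P}^n$), subscript $\mathfrak{p}$ denotes localization; $\mathfrak{p}$ is a division point of $\omega$ if $1\in I(\omega)_\mathfrak{p}$. $\mathcal{U}$ is the set of $\omega\in\mathcal{F}^1(\mathbb{P}^n,e)$ such that every point $\mathfrak{p}\notin\mathcal{K}$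 is a division point of $\omega$. *)

From HB Require Import structures.
From mathcomp Require Import all_boot all_order all_algebra.
From mathcomp Require Import Rstruct.
From mathcomp Require Import complex.
From mathcomp Require Import mpoly.

Set Implicit Arguments.
Unset Strict Implicit.
Unset Printing Implicit Defensive.

Import GRing.Theory.
Local Open Scope ring_scope.

Definition CC : closedFieldType := Rcomplex Rdefinitions.R.

(* S = C[x_0, ..., x_n]  (n.+1 variables, indexed by 'I_n.+1). *)
Definition Spoly (n : nat) := {mpoly CC[n.+1]}.

Definition is_ideal (R : comNzRingType) (I : R -> Prop) : Prop :=
  [/\ I 0, (forall a b, I a -> I b -> I (a + b)) & (forall r a, I a -> I (r * a))].

Definition is_prime_ideal (R : comNzRingType) (P : R -> Prop) : Prop :=
  [/\ is_ideal P, ~ P 1 & (forall a b, P (a * b) -> P a \/ P b)].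

Definition gen_ideal (R : comNzRingType) (I : finType) (g : I -> R) : R -> Prop :=
  fun h => exists c : I -> R, h = \sum_i c i * g i.

Definition colon_ideal (R : comNzRingType) (I1 I2 : R -> Prop) : R -> Prop :=
  fun h => forall g, I2 g -> I1 (h * g).

Definition ideal_radical (R : comNzRingType) (I : R -> Prop) : R -> Prop :=
  fun h => exists m : nat, I (h ^+ m).

Definition ideal_sub (R : comNzRingType) (I1 I2 : R -> Prop) : Prop :=
  forall h, I1 h -> I2 h.

Definition height_ge2 (R : comNzRingType) (q : R -> Prop) : Prop :=
  exists q0 q1 : R -> Prop,
    [/\ is_prime_ideal q0, is_prime_ideal q1,
        ideal_sub q0 q1 /\ ~ ideal_sub q1 q0 &
        ideal_sub q1 q /\ ~ ideal_sub q q1].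

Definition is_homogeneous_ideal n (I : Spoly n -> Prop) : Prop :=
  forall f d, I f -> I (pihomog mdeg d f).

Definition irrelevant_ideal n : Spoly n -> Prop :=
  gen_ideal (fun i : 'I_n.+1 => ('X_i : Spoly n)).

Definition set_eq (R : Type) (I1 I2 : R -> Prop) : Prop := forall h, I1 h <-> I2 h.

(* Points of P^n = Proj S: homogeneous primes other than the irrelevant ideal. *)
Definition is_Pn_point n (p : Spoly n -> Prop) : Prop :=
  [/\ is_prime_ideal p, is_homogeneous_ideal p & ~ set_eq p (@irrelevant_ideal n)].

(* Localization: the extended ideal I S_p, viewed inside the fraction field
   of S (S_p is the subring {a/s : s \notin p}). *)
Definition loc_ideal n (I p : Spoly n -> Prop) : {fraction Spoly n} -> Prop :=
  fun x => exists a s : Spoly n,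
    [/\ I a, ~ p s & x = FracField.tofrac a / FracField.tofrac s].

(* A polynomial 1-form  sum_i A_i dx_i  is given by its
   coefficient function A : 'I_n.+1 -> S.  A 2-form sum_{i<j} B_ij dx_i^dx_j is
   represented by the full alternating matrix (i,j) |-> B_ij. *)

Definition form1 n := 'I_n.+1 -> Spoly n.

Definition dform n (A : form1 n) : 'I_n.+1 -> 'I_n.+1 -> Spoly n :=
  fun i j => (A j)^`M(i) - (A i)^`M(j).

Definition wedge11 n (A eta : form1 n) : 'I_n.+1 -> 'I_n.+1 -> Spoly n :=
  fun i j => A i * eta j - A j * eta i.

Definition wedge12 n (A : form1 n) (B : 'I_n.+1 -> 'I_n.+1 -> Spoly n)
  : 'I_n.+1 -> 'I_n.+1 -> 'I_n.+1 -> Spoly n :=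
  fun i j k => A i * B j k - A j * B i k + A k * B i j.

Definition contrR n (A : form1 n) : Spoly n := \sum_i 'X_i * A i.

Definition coef_ideal1 n (A : form1 n) : Spoly n -> Prop := gen_ideal A.
Definition coef_ideal2 n (B : 'I_n.+1 -> 'I_n.+1 -> Spoly n) : Spoly n -> Prop :=
  gen_ideal (fun ij : 'I_n.+1 * 'I_n.+1 => B ij.1 ij.2).

Definition J_ideal n (A : form1 n) : Spoly n -> Prop := coef_ideal1 A.

Definition I_ideal n (A : form1 n) : Spoly n -> Prop :=
  fun h => exists eta : form1 n,
    forall i j, h * dform A i j = wedge11 A eta i j.

Definition K_ideal n (A : form1 n) : Spoly n -> Prop :=
  colon_ideal (J_ideal A) (coef_ideal2 (dform A)).

(* sing(omega) = V(J(omega)) in P^n has codimension >= 2: every prime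
   containing J(omega) has height >= 2. *)
Definition sing_codim_ge2 n (A : form1 n) : Prop :=
  forall q : Spoly n -> Prop, is_prime_ideal q -> ideal_sub (J_ideal A) q ->
    height_ge2 q.

(* omega in F^1(P^n, e) (representative of the projective class). *)
Definition in_F1 n (e : nat) (A : form1 n) : Prop :=
  (2 <= e)%N /\
  [/\ (forall i, A i \is (e.-1).-homog),
      (exists i, A i != 0),
      contrR A = 0,
      (forall i j k, wedge12 A (dform A) i j k = 0)
    & sing_codim_ge2 A].

Definition division_point n (A : form1 n) (p : Spoly n -> Prop) : Prop :=
  loc_ideal (I_ideal A) p 1.

(* p not in the subscheme K = Proj(S/K(omega)): K(omega) is not contained in p. *)
Definition notin_Kscheme n (A : form1 n) (p : Spoly n -> Prop) : Prop :=
  ~ ideal_sub (K_ideal A) p.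

Definition in_U n (e : nat) (A : form1 n) : Prop :=
  in_F1 e A /\
  forall p, is_Pn_point p -> notin_Kscheme A p -> division_point A p.

From HB Require Import structures.
From mathcomp Require Import all_boot all_order all_algebra.
From mathcomp Require Import Rstruct complex mpoly fraction zify ring.
From mathcomp Require Import boolp classical_sets.

Set Implicit Arguments.
Unset Strict Implicit.
Unset Printing Implicit Defensive.
Import GRing.Theory.
Local Open Scope ring_scope.

(* One inclusion of radicals is free since I(omega) is contained in K(omega);
   and if K(omega) lies in the radical of I(omega), every point p outside
   Proj(S/K) contains neither some k in K(omega) nor its power in I(omega),
   so 1 = k^m / k^m lies in I(omega)_p.

   Conversely, if h in K(omega) has no power in I(omega), Krull's argument gives
   a prime P over I(omega) avoiding h.  As I(omega) is a homogeneous ideal, the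
   homogeneous core of P is still a prime over I(omega) avoiding h, and it is
   not the irrelevant ideal because K(omega) has no constant terms: by Euler's
   formula and i_R omega = 0 some coefficient of d omega is a nonzero form of
   degree e - 2, whereas J(omega) vanishes below degree e - 1.  It is therefore
   a point outside Proj(S/K), hence a division point, which contradicts the
   inclusion of I(omega) in it. *)

Section Ideals.
Variable R : comNzRingType.
Implicit Types (I J : R -> Prop) (a b r : R).

Lemma ideal0 I : is_ideal I -> I 0. Proof. by case. Qed.

Lemma idealD I a b : is_ideal I -> I a -> I b -> I (a + b).
Proof. by case=> _ + _; apply. Qed.

Lemma idealMl I r a : is_ideal I -> I a -> I (r * a).
Proof. by case=> _ _; apply. Qed.

Lemma idealMr I r a : is_ideal I -> I a -> I (a * r).
Proof. by rewrite mulrC; apply: idealMl. Qed.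

Lemma idealB I a b : is_ideal I -> I a -> I b -> I (a - b).
Proof. by move=> idI Ia Ib; rewrite -mulN1r in Ib *; apply: idealD => //; apply: idealMl. Qed.

Lemma ideal_sum I (T : Type) (s : seq T) (P : pred T) (F : T -> R) :
  is_ideal I -> (forall i, P i -> I (F i)) -> I (\sum_(i <- s | P i) F i).
Proof.
move=> idI IF; elim/big_rec: _ => [|i x Pi Ix]; first exact: ideal0.
by apply: idealD => //; apply: IF.
Qed.

Lemma gen_ideal_is_ideal (T : finType) (g : T -> R) : is_ideal (gen_ideal g).
Proof.
split.
- by exists (fun _ => 0); rewrite big1 // => i _; rewrite mul0r.
- move=> _ _ [c ->] [c' ->]; exists (fun i => c i + c' i).
  by rewrite -big_split; apply: eq_bigr => i _; rewrite mulrDl.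
- move=> r _ [c ->]; exists (fun i => r * c i).
  by rewrite mulr_sumr; apply: eq_bigr => i _; rewrite mulrA.
Qed.

Lemma gen_ideal_gen (T : finType) (g : T -> R) i : gen_ideal g (g i).
Proof.
exists (fun j => (j == i)%:R).
by rewrite (bigD1 i) //= eqxx mul1r big1 ?addr0 // => j /negbTE ->; rewrite mul0r.
Qed.

Lemma prime_ideal_expn_notin P a m : is_prime_ideal P -> ~ P a -> ~ P (a ^+ m).
Proof.
case=> _ P1 Pmul Pa; elim: m => [|m IHm]; first by rewrite expr0.
by rewrite exprS => /Pmul [].
Qed.

Lemma radical_eq I J : ideal_sub I J -> ideal_sub J (ideal_radical I) ->
  set_eq (ideal_radical I) (ideal_radical J).
Proof.
move=> IJ JrI h; split=> [[m /IJ Jhm] | [m /JrI [k Ihmk]]]; first by exists m.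
by exists (m * k)%N; rewrite exprM.
Qed.

End Ideals.

Section PrimeAvoidingPowers.
Variables (R : comNzRingType) (I : R -> Prop) (f : R).

Definition avoids_powers (X : R -> Prop) := forall k, ~ X (f ^+ k).

Definition ideal_adjoin (X : R -> Prop) a : R -> Prop :=
  fun y => exists q r, X q /\ y = q + r * a.

Lemma ideal_adjoin_is_ideal X a : is_ideal X -> is_ideal (ideal_adjoin X a).
Proof.
move=> idX; split.
- by exists 0, 0; rewrite mul0r addr0; split=> //; apply: ideal0.
- move=> _ _ [q [r [Xq ->]]] [q' [r' [Xq' ->]]]; exists (q + q'), (r + r').
  by split; [apply: idealD | rewrite mulrDl addrACA].
- move=> s _ [q [r [Xq ->]]]; exists (s * q), (s * r).
  by split; [apply: idealMl | rewrite mulrDr mulrA].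
Qed.

Lemma ideal_adjoin_sub X a : ideal_sub X (ideal_adjoin X a).
Proof. by move=> y Xy; exists y, 0; rewrite mul0r addr0. Qed.

Lemma ideal_adjoin_mem X a : is_ideal X -> ideal_adjoin X a a.
Proof. by move=> idX; exists 0, 1; rewrite add0r mul1r; split=> //; apply: ideal0. Qed.

Lemma maximal_avoiding_prime M : is_ideal M -> avoids_powers M ->
  (forall X, is_ideal X -> avoids_powers X -> ideal_sub M X -> ideal_sub X M) ->
  is_prime_ideal M.
Proof.
move=> idM avM maxM; split=> //; first by have := avM 0%N; rewrite expr0.
move=> a b Mab; apply: contrapT => /not_orP[Ma Mb].
have adjoin_power c : ~ M c -> exists k, ideal_adjoin M c (f ^+ k).
  move=> Mc; apply: contrapT => /forallNP avMc; apply: Mc.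
  apply: (maxM _ (ideal_adjoin_is_ideal c idM) avMc (@ideal_adjoin_sub M c)).
  exact: ideal_adjoin_mem.
have [k [q1 [r1 [Mq1 Efk]]]] := adjoin_power a Ma.
have [l [q2 [r2 [Mq2 Efl]]]] := adjoin_power b Mb.
apply: (avM (k + l)%N); rewrite exprD Efk Efl.
have -> : (q1 + r1 * a) * (q2 + r2 * b) =
          q1 * (q2 + r2 * b) + (r1 * a * q2 + r1 * r2 * (a * b)) by ring.
by apply: idealD => //; [apply: idealMr | apply: idealD => //; apply: idealMl].
Qed.

Hypotheses (idI : is_ideal I) (avI : avoids_powers I).

Lemma avoiding_chain_union (F : set (R -> Prop)) X0 t0 : F X0 -> X0 t0 ->
  (forall X t, F X -> X t -> [/\ is_ideal X, ideal_sub I X & avoids_powers X]) ->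
  total_on F subset ->
  let U := fun t => exists2 X, F X & X t in
  [/\ is_ideal U, ideal_sub I U & avoids_powers U].
Proof.
move=> FX0 X0t0 Fav Ftot U; have [idX0 IX0 _] := Fav _ _ FX0 X0t0.
split; last by move=> k [X FX Xk]; have [_ _ /(_ k)] := Fav _ _ FX Xk.
- split; first by exists X0 => //; apply: ideal0.
  + move=> a b [Xa FXa Xaa] [Xb FXb Xbb].
    have [idXa _ _] := Fav _ _ FXa Xaa; have [idXb _ _] := Fav _ _ FXb Xbb.
    case: (Ftot _ _ FXa FXb) => [XaXb | XbXa].
      by exists Xb => //; apply: idealD => //; apply: XaXb.
    by exists Xa => //; apply: idealD => //; apply: XbXa.
  + by move=> r a [X FX Xa]; exists X => //; have [idX _ _] := Fav _ _ FX Xa; apply: idealMl.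
- by move=> g Ig; exists X0 => //; apply: IX0.
Qed.

Lemma prime_avoiding_powers :
  exists P, [/\ is_prime_ideal P, ideal_sub I P & ~ P f].
Proof.
(* Zorn's lemma needs a property closed under unions of all chains,
   including the empty one, whose union is empty. *)
pose zorn_good X :=
  (forall t, ~ X t) \/ [/\ is_ideal X, ideal_sub I X & avoids_powers X].
have [M [[M0 | [idM IM avM]] maxM]] :
    exists M, zorn_good M /\ forall X, proper M X -> ~ zorn_good X.
- apply: Zorn_bigcup => F FP Ftot.
  have [[X0 FX0 [t Xt]] | noX] := pselect (exists2 X, F X & exists t, X t).
    right; apply: (avoiding_chain_union FX0 Xt) => // X u FX Xu.
    by have [/(_ u)|] := FP _ FX.
  by left=> t [X FX Xt]; apply: noX; exists X => //; exists t.
- exfalso; apply: (maxM I); last by right; split.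
  split=> [t /M0 // | IM]; exact: M0 0 (IM 0 (ideal0 idI)).
exists M; split=> //; last by have := avM 1%N; rewrite expr1.
apply: maximal_avoiding_prime => // X idX avX MX t Xt; apply: contrapT => Mt.
apply: (maxM X); last by right; split=> // g /IM /MX.
by split=> // /(_ t Xt).
Qed.

End PrimeAvoidingPowers.

Section HomogeneousCore.
Variables (R : comNzRingType) (n : nat).
Implicit Types (p q : {mpoly R[n]}).
Local Notation ph := (pihomog mdeg).

Lemma pihomog_dhomog d e p : p \is d.-homog -> ph e p = if d == e then p else 0.
Proof.
move=> hp; case: eqP => [<-|/eqP ne]; first exact: pihomog_dE.
exact: pihomog_ne0 ne hp.
Qed.

Lemma pihomogMr t d p q : q \is t.-homog ->
  ph d (p * q) = if (t <= d)%N then ph (d - t) p * q else 0.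
Proof.
move=> hq; set k := (mmeasure mdeg p + d).+1.
rewrite {1}(@pihomog_partitionE _ _ mdeg k p); last by rewrite /k; lia.
rewrite mulr_suml raddf_sum /=.
have ph_term (i : 'I_k) : ph d (ph i p * q) = if (i + t == d)%N then ph i p * q else 0.
  by apply: pihomog_dhomog; apply: dhomogM => //; apply: pihomogP.
rewrite (eq_bigr _ (fun i _ => ph_term i)); case: leqP => [le_td | lt_dt].
  have lt_k : (d - t < k)%N by rewrite /k; lia.
  rewrite (bigD1 (Ordinal lt_k)) //= subnK // eqxx big1 ?addr0 // => i ne.
  case: eqP => // ei; case/eqP: ne; apply: val_inj => /=; lia.
by rewrite big1 // => i _; case: eqP => //; lia.
Qed.

Lemma pihomogMl t d p q : q \is t.-homog ->
  ph d (q * p) = if (t <= d)%N then q * ph (d - t) p else 0.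
Proof. by move=> hq; rewrite mulrC (pihomogMr d p hq); case: leqP; rewrite // mulrC. Qed.

Definition homog_core (P : {mpoly R[n]} -> Prop) : {mpoly R[n]} -> Prop :=
  fun g => forall d, P (ph d g).

Variable P : {mpoly R[n]} -> Prop.
Hypothesis idP : is_ideal P.

Lemma homog_core_sub : ideal_sub (homog_core P) P.
Proof.
move=> g Pg; rewrite (@pihomog_partitionE _ _ mdeg (mmeasure mdeg g) g) //.
by apply: ideal_sum => // i _; apply: Pg.
Qed.

Lemma homog_core_is_ideal : is_ideal (homog_core P).
Proof.
split.
- by move=> d; rewrite pihomog0; apply: ideal0.
- by move=> a b Pa Pb d; rewrite pihomogD; apply: idealD.
- move=> r a Pa d; rewrite (@pihomog_partitionE _ _ mdeg (mmeasure mdeg a) a) //.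
  rewrite mulr_sumr raddf_sum /=; apply: ideal_sum => // j _.
  rewrite (pihomogMr _ _ (pihomogP mdeg j a)); case: leqP => _; last exact: ideal0.
  exact: idealMl.
Qed.

Lemma homog_core_homogeneous g d : homog_core P g -> homog_core P (ph d g).
Proof.
move=> Pg d'; rewrite (pihomog_dhomog d' (pihomogP mdeg d g)).
by case: eqP => _; [apply: Pg | apply: ideal0].
Qed.

Lemma homog_core_notin_least g : ~ homog_core P g ->
  exists i, ~ P (ph i g) /\ forall j, (j < i)%N -> P (ph j g).
Proof.
move=> /existsNP exP.
have exB : exists i, ~~ `[< P (ph i g) >] by have [i Pi] := exP; exists i; apply/asboolP.
case: (ex_minnP exB) => i /asboolP Pi min_i; exists i; split=> // j lt_ji.
by apply: contrapT => Pj; have := min_i j (introN (asboolP _) Pj); rewrite leqNgt lt_ji.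
Qed.

(* Modulo P, the component of degree [i + j] of [a * b] reduces to the product
   of the least components of [a] and [b] lying outside P. *)
Lemma homog_core_prime : is_prime_ideal P -> is_prime_ideal (homog_core P).
Proof.
case=> _ P1 Pmul; split; first exact: homog_core_is_ideal.
  by move/(_ 0%N); rewrite pihomog_dE //; apply: dhomog1.
move=> a b Pab; apply: contrapT => /not_orP[/homog_core_notin_least[i [Pai min_i]]
                                            /homog_core_notin_least[j [Pbj min_j]]].
have := Pab (i + j)%N; set k := (mmeasure mdeg a + (i + j)).+1.
rewrite (@pihomog_partitionE _ _ mdeg k a); last by rewrite /k; lia.
have lt_ik : (i < k)%N by rewrite /k; lia.
rewrite mulr_suml raddf_sum (bigD1 (Ordinal lt_ik)) //= => Psum.
have Prest : P (\sum_(l < k | l != Ordinal lt_ik) ph (i + j) (ph l a * b)).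
  apply: ideal_sum => // l ne_li.
  rewrite (pihomogMl _ _ (pihomogP mdeg l a)); case: leqP => le_l; last exact: ideal0.
  case: (ltngtP l i) => [lt_li | lt_il | eq_li]; last by case/eqP: ne_li; apply: val_inj.
    by apply: idealMr => //; apply: min_i.
  by apply: idealMl => //; apply: min_j; lia.
have := idealB idP Psum Prest; rewrite addrK (pihomogMl _ _ (pihomogP mdeg i a)).
by rewrite leq_addr addKn => /Pmul[].
Qed.

End HomogeneousCore.

Section EulerFormula.
Variables (R : comNzRingType) (n : nat).
Implicit Types (p : {mpoly R[n]}) (m : 'X_{1..n}).

Lemma mderivX1 (i j : 'I_n) : ('X_i : {mpoly R[n]})^`M(j) = (i == j)%:R.
Proof.
rewrite mderivX mnm1E; case: eqP => [->|_]; last by rewrite scale0r.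
rewrite (_ : (U_(j) - U_(j))%MM = 0%MM) ?mpolyX0 ?scale1r //.
by apply/mnmP => k; rewrite mnmBE subnn mnm0E.
Qed.

Lemma mpolyX_mderivX m i : 'X_i * ('X_[m])^`M(i) = (m i)%:R *: ('X_[m] : {mpoly R[n]}).
Proof.
rewrite mderivX -scalerAr; have [->|mi_neq0] := eqVneq (m i) 0%N; first by rewrite !scale0r.
by rewrite -mpolyXD addmC submK // lep1mP.
Qed.

Lemma mderiv_dhomog d p i : p \is d.+1.-homog -> p^`M(i) \is d.-homog.
Proof.
move=> /dhomogP hp; rewrite [p]mpolyE raddf_sum /= big_seq.
apply: rpred_sum => m /hp mdeg_m; rewrite linearZ /= mderivX; apply: rpredZ.
have [mi0|mi_neq0] := eqVneq (m i) 0%N; first by rewrite mi0 scale0r rpred0.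
apply: rpredZ; rewrite dhomogX; move: mi_neq0; rewrite -lep1mP => le_Um.
by rewrite -(eqn_add2r 1) -(mdeg1 i) -mdegD submK // mdeg_m mdeg1 addn1.
Qed.

Lemma euler_mderiv d p : p \is d.-homog -> \sum_i 'X_i * p^`M(i) = p *+ d.
Proof.
move=> /dhomogP hp; rewrite {1 2}[p]mpolyE.
transitivity (\sum_(m <- msupp p) \sum_i p@_m *: ('X_i * ('X_[m])^`M(i))).
  rewrite exchange_big /=; apply: eq_bigr => i _.
  by rewrite raddf_sum mulr_sumr; apply: eq_bigr => m _; rewrite /= mderivZ scalerAr.
rewrite -sumrMnl big_seq [RHS]big_seq; apply: eq_bigr => m supp_m.
under eq_bigr do rewrite mpolyX_mderivX scalerA.
rewrite -scaler_suml -mulr_sumr -natr_sum -mdegE (hp m supp_m) -scalerA scaler_nat.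
by rewrite scalerMnr.
Qed.

End EulerFormula.

Section ProjectiveSpace.
Variable n : nat.
Local Notation ph := (pihomog mdeg).

Lemma CC_natrS_neq0 k : (k.+1%:R : CC) != 0.
Proof.
apply/eqP => /(congr1 (@complex.Re _)); rewrite (raddfMn (@complex.Re _)) /= => /eqP.
by rewrite Num.Theory.pnatr_eq0.
Qed.

Lemma irrelevant_ideal_pihomog0 (p : Spoly n) : ph 0 p = 0 -> irrelevant_ideal p.
Proof.
move=> p0; rewrite [p]mpolyE (bigID (fun m => mdeg m == 0%N)) /= -pihomogE p0 add0r.
apply: ideal_sum => [|m mdeg_m]; first exact: gen_ideal_is_ideal.
have [i mi_neq0] : exists i, m i != 0%N.
  apply: contrapT => /forallNP m0; move/negP: mdeg_m; apply; rewrite mdegE big1 // => i _.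
  by apply/eqP/negPn/negP; apply: m0.
rewrite (_ : 'X_[m] = 'X_[m - U_(i)] * 'X_i) ?scalerAl; last by rewrite -mpolyXD submK // lep1mP.
by apply: idealMl; [exact: gen_ideal_is_ideal | exact: (gen_ideal_gen (fun j => 'X_j))].
Qed.

Lemma loc_ideal1P (I p : Spoly n -> Prop) : is_ideal p ->
  loc_ideal I p 1 <-> exists2 a, I a & ~ p a.
Proof.
move=> idp; have neq0 s : ~ p s -> FracField.tofrac s != 0.
  by move=> ps; rewrite tofrac_eq0; apply/eqP => s0; apply: ps; rewrite s0; apply: ideal0.
split=> [[a [s [Ia ps as1]]] | [a Ia pa]]; last first.
  by exists a, a; split=> //; rewrite divff ?neq0.
exists a => //; suff -> : a = s by [].
apply/eqP; rewrite -tofrac_eq; apply/eqP.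
by rewrite -[LHS](divfK (neq0 _ ps)) -as1 mul1r.
Qed.

End ProjectiveSpace.

Section Forms.
Variables (n : nat) (A : form1 n).
Local Notation ph := (pihomog mdeg).

Lemma I_ideal_is_ideal : is_ideal (I_ideal A).
Proof.
split.
- by exists (fun _ => 0) => i j; rewrite mul0r /wedge11 !mulr0 subrr.
- move=> a b [eta_a Ha] [eta_b Hb]; exists (fun j => eta_a j + eta_b j) => i j.
  by rewrite mulrDl Ha Hb /wedge11; ring.
- move=> r a [eta Ha]; exists (fun j => r * eta j) => i j.
  by rewrite -mulrA Ha /wedge11; ring.
Qed.

Lemma I_sub_K : ideal_sub (I_ideal A) (K_ideal A).
Proof.
have idJ : is_ideal (J_ideal A) by apply: gen_ideal_is_ideal.
move=> h [eta H] g [c ->]; rewrite mulr_sumr; apply: ideal_sum => // ij _.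
rewrite mulrCA H /wedge11; apply: idealMl => //.
by apply: idealB => //; rewrite mulrC; apply: idealMl => //; apply: gen_ideal_gen.
Qed.

Lemma K_sub_radical_division_point p :
  ideal_sub (K_ideal A) (ideal_radical (I_ideal A)) ->
  is_prime_ideal p -> notin_Kscheme A p -> division_point A p.
Proof.
move=> KrI pp pK; have [idp _ _] := pp.
have [k Kk pk] : exists2 k, K_ideal A k & ~ p k.
  by apply: contrapT => npK; apply: pK => k Kk; apply: contrapT => pk; apply: npK; exists k.
have [m Ikm] := KrI k Kk; apply/loc_ideal1P => //.
by exists (k ^+ m) => //; apply: prime_ideal_expn_notin.
Qed.

Variable e : nat.
Hypothesis A_homog : forall i, A i \is e.+1.-homog.

Lemma dform_dhomog i j : dform A i j \is e.-homog.
Proof. by apply: rpredB; apply: mderiv_dhomog. Qed.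

Lemma J_ideal_pihomog_eq0 d h : (d <= e)%N -> J_ideal A h -> ph d h = 0.
Proof.
move=> le_de [c ->]; rewrite raddf_sum big1 // => i _ /=.
by rewrite (pihomogMr _ _ (A_homog i)) ltnNge (leq_trans le_de).
Qed.

Lemma I_ideal_homogeneous : is_homogeneous_ideal (I_ideal A).
Proof.
move=> h d [eta H].
exists (fun j => if (1 <= d)%N then ph (d + e - e.+1) (eta j) else 0) => i j.
have := congr1 (ph (d + e)) (H i j).
rewrite /wedge11 raddfB /= !(pihomogMl _ _ (A_homog _)).
rewrite (pihomogMr _ _ (dform_dhomog i j)) leq_addl addnK.
case: d => [|d] /=; first by rewrite add0n ltnn => ->; rewrite !mulr0 subr0.
by rewrite addSn ltnS leq_addl.
Qed.

(* Differentiating [i_R omega = 0] and applying Euler's formula gives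
   [(e + 1) A_i = sum_j x_j (d omega)_{ij}]. *)
Lemma dform_neq0 : (exists i, A i != 0) -> contrR A = 0 ->
  exists i j, dform A i j != 0.
Proof.
move=> [i0 Ai0] cA; apply: contrapT => /forallNP dA; move/negP: Ai0; apply.
have dA0 i j : dform A i j = 0 by apply/eqP/negPn/negP => dAij; apply: (dA i); exists j.
have := congr1 (mderiv i0) cA; rewrite /contrR raddf_sum /= raddf0.
under eq_bigr do rewrite mderivM mderivX1.
rewrite big_split /= (bigD1 i0) //= eqxx mul1r big1 ?addr0; last first.
  by move=> i /negbTE; rewrite eq_sym => ->; rewrite mul0r.
have -> : \sum_i 'X_i * (A i)^`M(i0) = \sum_i 'X_i * (A i0)^`M(i).
  apply: eq_bigr => i _; congr (_ * _); apply/eqP; rewrite -subr_eq0.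
  by have := dA0 i0 i; rewrite /dform => ->.
rewrite (euler_mderiv (A_homog i0)) -mulrS => /eqP.
by rewrite -scaler_nat scaler_eq0 (negbTE (CC_natrS_neq0 _)).
Qed.

Lemma K_ideal_pihomog0 h : (exists i, A i != 0) -> contrR A = 0 ->
  K_ideal A h -> ph 0 h = 0.
Proof.
move=> nzA cA Kh; have [i [j dAij]] := dform_neq0 nzA cA.
have Jh := Kh _ (gen_ideal_gen (fun ij => dform A ij.1 ij.2) (i, j)).
have := J_ideal_pihomog_eq0 (leqnn e) Jh.
rewrite /= (pihomogMr _ _ (dform_dhomog i j)) leqnn subnn => /eqP.
by rewrite mulf_eq0 (negbTE dAij) orbF => /eqP.
Qed.

Lemma K_sub_radical_I : (exists i, A i != 0) -> contrR A = 0 ->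
  (forall p, is_Pn_point p -> notin_Kscheme A p -> division_point A p) ->
  ideal_sub (K_ideal A) (ideal_radical (I_ideal A)).
Proof.
move=> nzA cA hU h Kh; apply: contrapT => nrI.
have avI : avoids_powers h (I_ideal A) by move=> k Ihk; apply: nrI; exists k.
have [P [Pp IP Ph]] := prime_avoiding_powers I_ideal_is_ideal avI.
have [idP _ _] := Pp; have Qp := homog_core_prime idP Pp; have [idQ _ _] := Qp.
set Q := homog_core P.
have IQ : ideal_sub (I_ideal A) Q by move=> g Ig d; apply/IP/I_ideal_homogeneous.
have Qh : ~ Q h by move/(homog_core_sub idP).
have Qpt : is_Pn_point Q.
  split=> // [g d|]; first exact: homog_core_homogeneous.
  move=> QE; apply/Qh/QE/irrelevant_ideal_pihomog0; exact: K_ideal_pihomog0.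
have [a Ia Qa] := (loc_ideal1P _ idQ).1 (hU Q Qpt (fun KQ => Qh (KQ h Kh))).
exact/Qa/IQ.
Qed.

End Forms.

Theorem theorem4p12 (n e : nat) (A : form1 n) :
  in_F1 e A ->
  (in_U e A -> set_eq (ideal_radical (I_ideal A)) (ideal_radical (K_ideal A))) /\
  (set_eq (ideal_radical (I_ideal A)) (ideal_radical (K_ideal A)) -> in_U e A).
Proof.
move=> hF; have [e_ge2 [A_homog nzA cA _ _]] := hF.
have A_homog' i : A i \is e.-2.+1.-homog by rewrite -subn2 -subn1 subnSK // in A_homog *.
split=> [[_ hU] | rIK].
  by apply: radical_eq; [exact: I_sub_K | exact: K_sub_radical_I A_homog' nzA cA hU].
split=> // p [pp _ _]; apply: K_sub_radical_division_point => // h Kh.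
by apply/rIK; exists 1%N; rewrite expr1.
Qed.
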